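(* Let $\alpha<\beta$ be positive integers. There is no function $f:\mathbb{N}\to\mathbb{N}$ such that $\mathrm{ecrw}_\alpha(G)\le f(\mathrm{ecrw}_\beta(G))$ for all graphs $G$. (Indeed, the graphs $G^{\alpha+1}_n$, $n\in\mathbb{N}$, have $\beta$-edge-crossing width $0$ and unbounded $\alpha$-edge-crossing width.)
   Context: For positive integers $n,k$, the graph $G^n_k$ has vertex set $A\cup B_k$ where $A=\{a_1,\dots,a_n\}$ and $B_k=\{(W,\ell): W\subseteq A,\ |W|=2,\ \ell\in[k]\}$, with $a\in A$ adjacent to $(W,\ell)$ iff $a\in W$, and no other edges. A tree-cut decomposition of a graph $G$ is a pair $\mathcal{T}=(T,\{X_t\}_{t\in V(T)})$ where $T$ is a tree and the bags $X_t\subseteq V(G)$ are pairwise disjoint (possibly empty) with $\bigcup_{t\in V(T)}X_t=V(G)$. For a node $t$ of $T$, let $T_1,\dots,T_m$ be the connected components of $T-t$ and $Z_i=\bigcup_{s\in V(T_i)}X_s$; $\mathrm{cross}_{\mathcal{T}}(t)$ is the number of edges of $G$ whose two endpoints lie in two distinct sets among $Z_1,\dots,Z_m$ (if $T$ has one node, $\mathrm{cross}_{\mathcal T}(t)=0$). The crossing number of $\mathcal{T}$ is $\max_{t}\mathrm{cross}_{\mathcal{T}}(t)$, and the thickness of $\mathcal{T}$ is $\max_t|X_t|$. $\mathrm{ecrw}_\alpha(G)$ is the minimum crossing number over tree-cut decompositions of $G$ of thickness at most $\alpha$. *)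

From mathcomp Require Import all_boot.
Set Implicit Arguments. Unset Strict Implicit. Unset Printing Implicit Defensive.

Definition is_tree (N : finType) (tr : rel N) : Prop :=
  [/\ 0 < #|N|, symmetric tr, irreflexive tr,
      (forall x y : N, connect tr x y) &
      (forall c : seq N, uniq c -> 2 < size c -> ~~ cycle tr c)].

Definition same_comp (N : finType) (tr : rel N) (t x y : N) : bool :=
  connect [rel a b | [&& tr a b, a != t & b != t]] x y.

(* A tree-cut decomposition of G (vertex set V) over tree (N, tr) is given by the
   map bag : V -> N, with X_t = [set v | bag v == t] (pairwise disjoint, covering V). *)
Definition bagset (V N : finType) (bag : V -> N) (t : N) : {set V} :=
  [set v | bag v == t].

Definition separated (V N : finType) (tr : rel N) (bag : V -> N) (t : N) (u v : V)
  : bool :=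
  [&& bag u != t, bag v != t & ~~ same_comp tr t (bag u) (bag v)].

Definition cross (V N : finType) (e : rel V) (tr : rel N) (bag : V -> N) (t : N)
  : nat :=
  #|[set [set u; v] | u in [set: V], v in [set: V] & e u v && separated tr bag t u v]|.

Definition crossing_number (V N : finType) (e : rel V) (tr : rel N) (bag : V -> N)
  : nat := \max_(t : N) cross e tr bag t.

Definition thickness_le (V N : finType) (bag : V -> N) (alpha : nat) : Prop :=
  forall t : N, #|bagset bag t| <= alpha.

Definition ecrw_is (alpha : nat) (V : finType) (e : rel V) (k : nat) : Prop :=
  (exists (N : finType) (tr : rel N) (bag : V -> N),
      [/\ is_tree tr, thickness_le bag alpha & crossing_number e tr bag = k]) /\
  (forall (N : finType) (tr : rel N) (bag : V -> N),
      is_tree tr -> thickness_le bag alpha -> k <= crossing_number e tr bag).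

From mathcomp Require Import all_boot zify.
From Stdlib Require Import ClassicalEpsilon.
Set Implicit Arguments. Unset Strict Implicit. Unset Printing Implicit Defensive.

(* Instead of the graphs G^(alpha+1)_k we use the complete bipartite graphs
   K_(alpha+1,k), with sides A and B.  Since alpha < beta, K_(alpha+1,k) has
   beta-width 0: put A into the centre of a star and each vertex of B into its
   own leaf.  In a decomposition of thickness alpha two vertices of A lie in
   distinct bags s, s'.  If a node t separates s from s', every vertex of B
   outside X_t has an edge to A crossing at t, giving k - alpha crossings.
   Otherwise s s' is a tree edge, and every vertex of B outside X_s and X_s'
   has an edge crossing at s or at s', so cross(s) + cross(s') >= k - 2 alpha.
   Hence the alpha-width is unbounded as k grows. *)

Lemma ex_minn_prop (P : nat -> Prop) :
  (exists n, P n) -> exists2 n, P n & forall m, P m -> n <= m.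
Proof.
pose p n := if excluded_middle_informative (P n) then true else false.
have pP n : reflect (P n) (p n).
  by rewrite /p; case: excluded_middle_informative => ?; constructor.
move=> [n Pn]; have ex_p : exists n, p n by exists n; apply/pP.
by case: (ex_minnP ex_p) => m /pP Pm min_m; exists m => // m' /pP /min_m.
Qed.

Section TreeComponents.

Variables (N : finType) (tr : rel N).
Hypothesis tree_tr : is_tree tr.

Definition del_edge (x y : N) : rel N :=
  [rel a b | tr a b && ~~ (((a == x) && (b == y)) || ((a == y) && (b == x)))].

Lemma del_edge_sym x y : symmetric (del_edge x y).
Proof.
have [_ tr_sym _ _ _] := tree_tr.
by move=> a b; rewrite /del_edge /= tr_sym orbC (andbC (b == x)) (andbC (b == y)).
Qed.

Lemma tree_bridge x y : tr x y -> ~~ connect (del_edge x y) y x.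
Proof.
have [_ _ tr_irr _ tr_acyclic] := tree_tr.
move=> tr_xy; apply/negP => /connectP [p p_path x_last].
case: (shortenP p_path) x_last => [[|z [|w q]]] /= q_path q_uniq _ x_last.
- by move: tr_xy; rewrite x_last tr_irr.
- by move: q_path; rewrite /= -x_last /del_edge /= !eqxx orbT !andbF.
- apply: (negP (tr_acyclic (y :: z :: w :: q) q_uniq isT)).
  rewrite /cycle rcons_path [last _ _]/= -x_last tr_xy andbT.
  by apply: (@sub_path _ (del_edge x y) _ _ y (z :: w :: q)) q_path => a b /andP [].
Qed.

Lemma same_comp_del_edge t x y a b :
  (t == x) || (t == y) -> same_comp tr t a b -> connect (del_edge x y) a b.
Proof.
move=> t_xy; apply: connect_sub => c d /and3P [tr_cd ct dt]; apply: connect1.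
rewrite /del_edge /= tr_cd; apply/negP => /orP [] /andP [/eqP c_eq /eqP d_eq];
  by case/orP: t_xy => /eqP t_eq; move: ct dt; rewrite c_eq d_eq t_eq eqxx ?andbF.
Qed.

Lemma same_comp_sym t x y : same_comp tr t x y = same_comp tr t y x.
Proof.
have [_ tr_sym _ _ _] := tree_tr.
by apply: sym_connect_sym => c d /=; rewrite tr_sym (andbC (c != t)).
Qed.

(* A node on the s'-side of s and on the s-side of s' would close a cycle through s s'. *)
Lemma same_comp_adj s s' u : tr s s' -> same_comp tr s u s' -> ~~ same_comp tr s' u s.
Proof.
move=> tr_ss' us'; apply/negP => us; apply: (negP (tree_bridge tr_ss')).
have sym := sym_connect_sym (del_edge_sym s s').
apply: connect_trans (_ : connect (del_edge s s') u s).
  by rewrite sym; apply: (@same_comp_del_edge s); rewrite ?eqxx.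
by apply: (@same_comp_del_edge s'); rewrite ?eqxx ?orbT.
Qed.

Lemma adj_of_unseparated s s' : s != s' ->
  (forall t, t != s -> t != s' -> same_comp tr t s s') -> tr s s'.
Proof.
have [_ tr_sym _ tr_conn _] := tree_tr.
move=> ss' unsep; case/connectP: (tr_conn s s') => p p_path.
case: (shortenP p_path) => [[|z [|w q]]] /= q_path q_uniq _ last_q.
- by rewrite last_q eqxx in ss'.
- by move: q_path; rewrite last_q andbT.
case/and3P: q_path => tr_sz tr_zw wq_path; case/and4P: q_uniq => s_notin z_notin _ _.
have zs : z != s by apply: contraNneq s_notin => <-; rewrite mem_head.
have zs' : z != s' by rewrite last_q; apply: contraNneq z_notin => ->; exact: mem_last.
have wq_avoid_s : all (predC1 s) (w :: q).
  by apply/allP => c c_in; apply: contraNneq s_notin => <-; rewrite inE c_in orbT.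
exfalso; apply: (negP (tree_bridge tr_sz)).
apply: (@connect_trans _ _ s'); last first.
  by rewrite (sym_connect_sym (del_edge_sym s z)); apply: (@same_comp_del_edge z);
    rewrite ?eqxx ?orbT ?unsep.
apply/connectP; exists (w :: q); last by [].
apply/andP; split.
  move: wq_avoid_s => /andP [/= ws _].
  by rewrite /del_edge /= tr_zw (negbTE zs) (negbTE ws) !andbF.
apply: (sub_in_path _ wq_avoid_s wq_path) => a b /= /negbTE a_s /negbTE b_s tr_ab.
by rewrite /del_edge /= tr_ab a_s b_s !andbF.
Qed.

End TreeComponents.

Definition star_rel (T : finType) : rel (option T) :=
  fun x y => (x == None) != (y == None).

Lemma star_tree (T : finType) : is_tree (@star_rel T).
Proof.
have star_sym : symmetric (@star_rel T) by move=> x y; rewrite /star_rel eq_sym.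
split=> //.
- by apply/card_gt0P; exists None.
- by move=> x; rewrite /star_rel eqxx.
- have center x : connect (@star_rel T) None x by case: x => [x|]; rewrite ?connect0 ?connect1.
  move=> x y; apply: connect_trans (center y).
  by rewrite (sym_connect_sym star_sym) center.
- case=> [|x0 [|x1 [|x2 c]]] //= c_uniq _; rewrite /cycle /star_rel /=.
  case: x0 x1 x2 c c_uniq => [?|] [?|] [?|] [|[?|] c] //=; rewrite ?inE ?andbF //.
Qed.

Lemma same_comp_star (T : finType) (t x y : option T) :
  x != t -> y != t -> (x == None) || (y == None) -> same_comp (@star_rel T) t x y.
Proof.
move=> xt yt xy_center; have [-> | x_ne_y] := eqVneq x y; first exact: connect0.
apply: connect1; rewrite /= xt yt andbT /star_rel.
by case: x y {xt yt} x_ne_y xy_center => [?|] [?|].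
Qed.

Lemma star_crossing_number0 (V T : finType) (e : rel V) (bag : V -> option T) :
  (forall u v, e u v -> (bag u == None) || (bag v == None)) ->
  crossing_number e (@star_rel T) bag = 0.
Proof.
move=> e_center; apply: big1 => t _; apply/eqP; rewrite cards_eq0; apply/eqP/setP => X.
rewrite inE; apply/negP => /imset2P [u v _]; rewrite !inE => /andP [_ /andP [e_uv]].
by case/and3P=> ut vt; rewrite same_comp_star ?e_center.
Qed.

Lemma ecrw_exists (alpha : nat) (V : finType) (e : rel V) :
  0 < alpha -> exists k, ecrw_is alpha e k.
Proof.
move=> alpha_gt0.
pose P k := exists (N : finType) (tr : rel N) (bag : V -> N),
  [/\ is_tree tr, thickness_le bag alpha & crossing_number e tr bag = k].
have [|k Pk k_min] := @ex_minn_prop P.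
  exists (crossing_number e (@star_rel V) Some), (option V : finType), (@star_rel V), Some.
  split=> //; first exact: star_tree.
  move=> t; apply: leq_trans alpha_gt0; apply/card_le1_eqP => u v.
  by rewrite !inE => /eqP <- /eqP [].
by exists k; split=> // N tr bag tree_tr thick; apply: k_min; exists N, tr, bag.
Qed.

Lemma card_bag_preim (I V N : finType) (bag : V -> N) (alpha : nat) (h : I -> V) (t : N) :
  injective h -> thickness_le bag alpha -> #|[set j | bag (h j) == t]| <= alpha.
Proof.
move=> h_inj thick; apply: leq_trans (thick t); rewrite -(card_imset _ h_inj).
by apply/subset_leq_card/subsetP => _ /imsetP [j + ->]; rewrite !inE.
Qed.

Definition kbip (a k : nat) : rel ('I_a + 'I_k) := fun x y =>
  match x, y with inl _, inr _ | inr _, inl _ => true | _, _ => false end.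
Arguments kbip : clear implicits.

Lemma kbip_sym a k : symmetric (kbip a k).
Proof. by case=> x [] y. Qed.

Lemma kbip_irr a k : irreflexive (kbip a k).
Proof. by case. Qed.

Definition kbip_bag (a k : nat) (v : 'I_a + 'I_k) : option ('I_a + 'I_k) :=
  if v is inr _ then Some v else None.

Lemma ecrw_kbip0 (a k beta : nat) : 0 < beta -> a <= beta -> ecrw_is beta (kbip a k) 0.
Proof.
move=> beta_gt0 a_le_beta; split=> //.
exists (option ('I_a + 'I_k) : finType), (@star_rel _), (@kbip_bag a k); split.
- exact: star_tree.
- case=> [w|].
    apply: leq_trans beta_gt0; apply/card_le1_eqP => u v.
    by rewrite !inE; case: u v => [?|?] [?|?] //= /eqP [<-] /eqP [->].
  apply: leq_trans (subset_leq_card (_ : _ \subset inl @: 'I_a)) _.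
    by apply/subsetP => -[i|j]; rewrite !inE // => _; apply: imset_f.
  by rewrite card_imset ?card_ord //; exact: inl_inj.
- by apply: star_crossing_number0 => -[i|j] [i'|j'].
Qed.

Lemma thick_bags_neq (I V N : finType) (bag : V -> N) (alpha : nat) (h : I -> V) :
  injective h -> thickness_le bag alpha -> alpha < #|I| ->
  exists i i', bag (h i) != bag (h i').
Proof.
move=> h_inj thick alpha_lt; have [i0 _] : exists i0 : I, true.
  by apply/existsP; rewrite -lt0n; apply: leq_ltn_trans alpha_lt.
have [/existsP [i ne] | /existsPn all_eq] := boolP [exists i, bag (h i) != bag (h i0)].
  by exists i, i0.
have := card_bag_preim (bag (h i0)) h_inj thick.
have -> : [set j | bag (h j) == bag (h i0)] = [set: I].
  by apply/setP => j; rewrite !inE; move/negPn: (all_eq j).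
by rewrite cardsT leqNgt alpha_lt.
Qed.

Lemma kbip_cross_ge (a k : nat) (N : finType) (tr : rel N) (bag : 'I_a + 'I_k -> N) (t : N)
    (D : {set 'I_k}) (g : 'I_k -> 'I_a) :
  (forall j, j \in D -> separated tr bag t (inr j) (inl (g j))) ->
  #|D| <= cross (kbip a k) tr bag t.
Proof.
move=> sep; pose edge j : {set 'I_a + 'I_k} := [set inr j; inl (g j)].
have edge_inj : {in D &, injective edge}.
  move=> j1 j2 _ _ edge_eq; have : inr j1 \in edge j2 by rewrite -edge_eq set21.
  by rewrite !inE => /orP [/eqP [] |].
rewrite -(card_in_imset edge_inj); apply/subset_leq_card/subsetP => _ /imsetP [j jD ->].
by apply/imset2P; exists (inr j) (inl (g j)); rewrite ?inE ?sep.
Qed.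

Section KbipLowerBound.

Variables (a k alpha : nat) (N : finType) (tr : rel N) (bag : 'I_a + 'I_k -> N).
Hypotheses (tree_tr : is_tree tr) (thick : thickness_le bag alpha).

Let card_B_bag t : #|[set j | bag (inr j) == t]| <= alpha.
Proof. exact: card_bag_preim inr_inj thick. Qed.

Lemma kbip_cross_separating (i i' : 'I_a) (t : N) :
  t != bag (inl i) -> t != bag (inl i') -> ~~ same_comp tr t (bag (inl i)) (bag (inl i')) ->
  k - alpha <= cross (kbip a k) tr bag t.
Proof.
move=> ti ti' sep_ii'.
pose g j := if same_comp tr t (bag (inr j)) (bag (inl i)) then i' else i.
have sep_B : forall j, j \in ~: [set j | bag (inr j) == t] ->
    separated tr bag t (inr j) (inl (g j)).
  move=> j; rewrite !inE => jt; rewrite /separated /g jt.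
  case: ifP => [ji | ->]; last by rewrite eq_sym ti.
  rewrite eq_sym ti' /=; apply: contra sep_ii' => ji'.
  by apply: (connect_trans _ ji'); rewrite -/(same_comp tr t _ _) (same_comp_sym tree_tr).
set B := [set j | bag (inr j) == t] in sep_B *.
have C_le : #|~: B| <= cross (kbip a k) tr bag t := kbip_cross_ge sep_B.
have B_le : #|B| <= alpha := card_B_bag t.
have B_C : #|B| + #|~: B| = k by rewrite cardsC card_ord.
lia.
Qed.

Lemma kbip_cross_adjacent (i i' : 'I_a) :
  tr (bag (inl i)) (bag (inl i')) ->
  k - 2 * alpha <=
    cross (kbip a k) tr bag (bag (inl i)) + cross (kbip a k) tr bag (bag (inl i')).
Proof.
have [_ _ tr_irr _ _] := tree_tr.
set s := bag (inl i); set s' := bag (inl i') => tr_ss'.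
have ss' : s != s' by apply: contraTneq tr_ss' => ->; rewrite tr_irr.
pose D := [set j | separated tr bag s (inr j) (inl i')].
pose D' := [set j | separated tr bag s' (inr j) (inl i)].
have cover : ~: (D :|: D') \subset [set j | bag (inr j) == s] :|: [set j | bag (inr j) == s'].
  apply/subsetP => j; rewrite !inE /separated -/s -/s' (eq_sym s') ss' /=.
  case: eqP => //= _; case: eqP => //= _.
  by case: (boolP (same_comp tr s _ s')) => // j_s; rewrite (same_comp_adj tree_tr tr_ss' j_s).
have D_le : #|D| <= cross (kbip a k) tr bag s.
  by apply: (kbip_cross_ge (g := fun=> i')) => j; rewrite inE.
have D'_le : #|D'| <= cross (kbip a k) tr bag s'.
  by apply: (kbip_cross_ge (g := fun=> i)) => j; rewrite inE.
have := subset_leq_card cover; rewrite !cardsU.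
have := cardsC (D :|: D'); rewrite card_ord cardsU.
by have := card_B_bag s; have := card_B_bag s'; lia.
Qed.

End KbipLowerBound.

Lemma kbip_crossing_number_ge (a k alpha : nat) (N : finType) (tr : rel N)
    (bag : 'I_a + 'I_k -> N) :
  is_tree tr -> thickness_le bag alpha -> alpha < a ->
  k - 2 * alpha <= 2 * crossing_number (kbip a k) tr bag.
Proof.
move=> tree_tr thick alpha_lt_a.
have cross_le t : cross (kbip a k) tr bag t <= crossing_number (kbip a k) tr bag.
  exact: leq_bigmax.
have [|i [i' ii']] := thick_bags_neq inl_inj thick; first by rewrite card_ord.
have [/existsP [t /and3P [ti ti' sep]] | /existsPn unsep] :=
  boolP [exists t, [&& t != bag (inl i), t != bag (inl i') &
                      ~~ same_comp tr t (bag (inl i)) (bag (inl i'))]].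
  by have := leq_trans (kbip_cross_separating tree_tr thick ti ti' sep) (cross_le t); lia.
have tr_ii' : tr (bag (inl i)) (bag (inl i')).
  by apply: (adj_of_unseparated tree_tr ii') => t ti ti'; move: (unsep t); rewrite ti ti' negbK.
have := leq_trans (kbip_cross_adjacent tree_tr thick tr_ii') (leq_add (cross_le _) (cross_le _)).
lia.
Qed.

Theorem lemma3p4 (alpha beta : nat) :
  0 < alpha -> alpha < beta ->
  ~ (exists f : nat -> nat,
       forall (V : finType) (e : rel V), symmetric e -> irreflexive e ->
       forall a b : nat, ecrw_is alpha e a -> ecrw_is beta e b -> a <= f b).
Proof.
move=> alpha_gt0 alpha_lt_beta [f bound_f].
pose k := 2 * (f 0).+1 + 2 * alpha.
have [c ecrw_c] := ecrw_exists (kbip alpha.+1 k) alpha_gt0.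
have ecrw_0 := ecrw_kbip0 k (ltn_trans alpha_gt0 alpha_lt_beta) alpha_lt_beta.
have := bound_f _ _ (@kbip_sym _ _) (@kbip_irr _ _) _ _ ecrw_c ecrw_0.
have [[N [tr [bag [tree_tr thick <-]]]] _] := ecrw_c.
by have := kbip_crossing_number_ge tree_tr thick (ltnSn alpha); rewrite /k; lia.
Qed.
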